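(* Let $t\in\Lambda_s$ be a simple term such that $t\frown t$. Then $t$ is in $\mathsf{r}$-normal form if and only if $t$ is a resource approximant.
   Context: Call-by-value resource calculus. Resource values $u,v::=x\mid \lambda x.t$; simple terms $s,t::= st\mid [v_1,\dots,v_k]$ ($k\ge0$, bags are finite multisets); $\Lambda_s$ is the set of simple terms. The reduction $\to_{\mathsf{r}}$ is the contextual closure (extended to finite sets of terms) of the rules: $(\beta_r)$ $[\lambda x.t][v_1,\dots,v_n]\to t\langle v_1,\dots,v_n/x\rangle$ (the set of all ways of linearly substituting the $v_i$ for the free occurrences of $x$, empty if the number of occurrences differs from $n$); $(0)$ $[v_1,\dots,v_n]\,t\to\emptyset$ when $n\neq1$; $(\sigma_1)$ $[\lambda x.t]s_1s_2\to[\lambda x.ts_2]s_1$ if $x\notin FV(s_1)$; $(\sigma_3)$ $[v]([\lambda x.t]s)\to[\lambda x.[v]t]s$ if $x\notin FV(v)$. The coherence relation $\frown$ on resource terms is the smallest relation such that: $x\frown x$; $\lambda x.s\frown\lambda x.t$ whenever $s\frown t$; $[v_1,\dots,v_k]\frown[v_{k+1},\dots,v_n]$ whenever $v_i\frown v_j$ for all $i,j\le n$; $s_1t_1\frown s_2t_2$ whenever $s_1\frown s_2$ and $t_1\frown t_2$. Resource approximants are the simple terms generated by ($k,n\ge0$): $a::=b\mid c$; $b::=[x^n]\mid[\lambda x.a_1,\dots,\lambda x.a_n]\mid [x]\,b\,a_1\cdots a_k$; $c::=[\lambda x.a]([y]\,b\,a_1\cdots a_k)$, where $[x^n]$ is the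 bag with $n$ copies of $x$. *)

(* Call-by-value resource calculus, locally nameless-free:
   de Bruijn indices (terms are identified up to alpha-equivalence). *)
From Stdlib Require Import List Arith Permutation.
Import ListNotations.

(* simple terms  s,t ::= s t | [v1,...,vk]   (bags represented by lists;
   every predicate below is invariant under permutation of bag elements)
   resource values u,v ::= x | \x.t *)
Inductive term : Type :=
| App : term -> term -> term
| Bag : list value -> term
with value : Type :=
| Var : nat -> value
| Lam : term -> value.

Fixpoint lift_t (c : nat) (t : term) : term :=
  match t with
  | App s u => App (lift_t c s) (lift_t c u)
  | Bag vs => Bag ((fix go (l : list value) : list value :=
                      match l with
                      | [] => []
                      | v :: l' => lift_v c v :: go l'
                      end) vs)
  end
with lift_v (c : nat) (v : value) : value :=
  match v with
  | Var n => Var (if c <=? n then S n else n)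
  | Lam t => Lam (lift_t (S c) t)
  end.

(* Linear substitution: [lsub_t k t vs u] means u is one of the terms in
   t<vs/x>, where x is the de Bruijn index k (k binders deep).  Each value of
   the multiset vs replaces exactly one occurrence of x (the set is empty if
   the number of occurrences differs from the length of vs). *)
Inductive lsub_t : nat -> term -> list value -> term -> Prop :=
| ls_app k s u vs vs1 vs2 s' u' :
    Permutation vs (vs1 ++ vs2) -> lsub_t k s vs1 s' -> lsub_t k u vs2 u' ->
    lsub_t k (App s u) vs (App s' u')
| ls_nil k : lsub_t k (Bag []) [] (Bag [])
| ls_cons k w ws vs vs1 vs2 w' ws' :
    Permutation vs (vs1 ++ vs2) -> lsub_v k w vs1 w' ->
    lsub_t k (Bag ws) vs2 (Bag ws') ->
    lsub_t k (Bag (w :: ws)) vs (Bag (w' :: ws'))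
with lsub_v : nat -> value -> list value -> value -> Prop :=
| ls_hit k v : lsub_v k (Var k) [v] (Nat.iter k (lift_v 0) v)
| ls_miss k n : n <> k ->
    lsub_v k (Var n) [] (Var (if k <? n then n - 1 else n))
| ls_lam k t vs t' : lsub_t (S k) t vs t' -> lsub_v k (Lam t) vs (Lam t').

(* One-step r-reduction of a term to a finite set (list) of terms:
   root rules (beta_r), (0), (sigma_1), (sigma_3) and contextual closure. *)
Inductive red : term -> list term -> Prop :=
| r_beta t vs T :
    (forall u, In u T <-> lsub_t 0 t vs u) ->
    red (App (Bag [Lam t]) (Bag vs)) T
| r_zero vs u : length vs <> 1 -> red (App (Bag vs) u) []
| r_sigma1 t s1 s2 :
    red (App (App (Bag [Lam t]) s1) s2)
        [App (Bag [Lam (App t (lift_t 0 s2))]) s1]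
| r_sigma3 v t s :
    red (App (Bag [v]) (App (Bag [Lam t]) s))
        [App (Bag [Lam (App (Bag [lift_v 0 v]) t)]) s]
| r_appl s u S : red s S -> red (App s u) (map (fun s' => App s' u) S)
| r_appr s u U : red u U -> red (App s u) (map (fun u' => App s u') U)
| r_bag vs1 t vs2 T :
    red t T ->
    red (Bag (vs1 ++ Lam t :: vs2)) (map (fun t' => Bag (vs1 ++ Lam t' :: vs2)) T).

Definition r_normal (t : term) : Prop := forall T, ~ red t T.

Inductive coh_t : term -> term -> Prop :=
| coh_app s1 t1 s2 t2 :
    coh_t s1 s2 -> coh_t t1 t2 -> coh_t (App s1 t1) (App s2 t2)
| coh_bag vs ws :
    (forall v w, In v (vs ++ ws) -> In w (vs ++ ws) -> coh_v v w) ->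
    coh_t (Bag vs) (Bag ws)
with coh_v : value -> value -> Prop :=
| coh_var x : coh_v (Var x) (Var x)
| coh_lam s t : coh_t s t -> coh_v (Lam s) (Lam t).

(* resource approximants:
   a ::= b | c
   b ::= [x^n] | [\x.a1,...,\x.an] | [x] b a1 ... ak   (the last: neu)
   c ::= [\x.a] ([y] b a1 ... ak) *)
Inductive approx : term -> Prop :=
| ap_b t : approx_b t -> approx t
| ap_c a n : approx a -> neu n -> approx (App (Bag [Lam a]) n)
with approx_b : term -> Prop :=
| ab_vars n x : approx_b (Bag (repeat (Var x) n))
| ab_lams l : (forall a, In a l -> approx a) -> approx_b (Bag (map Lam l))
| ab_neu n : neu n -> approx_b n
with neu : term -> Prop :=
| neu_head x b : approx_b b -> neu (App (Bag [Var x]) b)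
| neu_app n a : neu n -> approx a -> neu (App n a).

From Stdlib Require Import List Arith Permutation.
Import ListNotations.

(* An application [s u] is r-normal iff [s] and [u] are and the root is not a
   redex of one of the four rules; for (beta_r) this needs the set of linear
   substitutions [t<vs/x>] to be finite, so that the rule can always fire.
   Approximants are closed under application precisely at the non-redex roots,
   which gives "normal implies approximant" by structural induction; coherence
   is only used at bags, where it forces the shape [x^n] or [\x.a1,...,\x.an].
   Conversely, neutral terms and b-terms never have the shape [\x.t] s, so
   approximants contain no redex. *)

Section TermValueInd.

Variables (P : term -> Prop) (Q : value -> Prop).
Hypothesis P_App : forall s u, P s -> P u -> P (App s u).
Hypothesis P_Bag : forall vs, Forall Q vs -> P (Bag vs).
Hypothesis Q_Var : forall n, Q (Var n).
Hypothesis Q_Lam : forall t, P t -> Q (Lam t).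

Fixpoint term_value_ind (t : term) : P t :=
  match t with
  | App s u => P_App s u (term_value_ind s) (term_value_ind u)
  | Bag vs => P_Bag vs ((fix bag_ind (vs : list value) : Forall Q vs :=
                           match vs with
                           | [] => Forall_nil Q
                           | v :: vs' => Forall_cons v (value_term_ind v) (bag_ind vs')
                           end) vs)
  end
with value_term_ind (v : value) : Q v :=
  match v with
  | Var n => Q_Var n
  | Lam t => Q_Lam t (term_value_ind t)
  end.

End TermValueInd.

Definition finite {A} (P : A -> Prop) : Prop :=
  exists T : list A, forall x, In x T <-> P x.

Lemma finite_ext {A} (P Q : A -> Prop) :
  (forall x, P x <-> Q x) -> finite P -> finite Q.
Proof. intros HPQ [T HT]; exists T; intros x; rewrite HT; apply HPQ. Qed.

Lemma finite_empty {A} (P : A -> Prop) : (forall x, ~ P x) -> finite P.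
Proof. intros HP; exists []; intros x; simpl; split; [tauto | apply HP]. Qed.

Lemma finite_singleton {A} (a : A) (P : A -> Prop) :
  (forall x, P x <-> x = a) -> finite P.
Proof.
  intros HP; exists [a]; intros x; rewrite HP; simpl.
  split; [intros [-> | []] | intros ->]; auto.
Qed.

Lemma finite_bind {A B} (P : A -> Prop) (Q : A -> B -> Prop) :
  finite P -> (forall x, finite (Q x)) ->
  finite (fun y => exists x, P x /\ Q x y).
Proof.
  intros [T HT] HQ.
  apply (finite_ext (fun y => exists x, In x T /\ Q x y));
    [intros y; split; intros [x [Hx Hy]]; exists x; rewrite HT in *; auto |].
  clear HT; induction T as [|x T IH].
  - apply finite_empty; intros y [x [[] _]].
  - destruct (HQ x) as [Tx HTx], IH as [TT HTT].
    exists (Tx ++ TT); intros y; rewrite in_app_iff, HTx, HTT; simpl.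
    split.
    + intros [Hy | [x' [Hx' Hy]]]; eauto.
    + intros [x' [[<- | Hx'] Hy]]; eauto.
Qed.

Fixpoint splits {A} (l : list A) : list (list A * list A) :=
  match l with
  | [] => [([], [])]
  | x :: r => flat_map (fun p => [(x :: fst p, snd p); (fst p, x :: snd p)]) (splits r)
  end.

Lemma splits_perm {A} (l : list A) p :
  In p (splits l) -> Permutation l (fst p ++ snd p).
Proof.
  induction l as [|x r IH] in p |- *; simpl.
  - intros [<- | []]; constructor.
  - intros Hp; apply in_flat_map in Hp as [p0 [Hp0 [<- | [<- | []]]]]; simpl.
    + apply perm_skip, IH, Hp0.
    + eapply perm_trans; [apply perm_skip, IH, Hp0 | apply Permutation_middle].
Qed.

Lemma splits_complete {A} (l l1 l2 : list A) :
  Permutation l (l1 ++ l2) ->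
  exists p, In p (splits l) /\ Permutation l1 (fst p) /\ Permutation l2 (snd p).
Proof.
  induction l as [|x r IH] in l1, l2 |- *; intros Hl.
  - apply Permutation_nil, app_eq_nil in Hl as [-> ->].
    exists ([], []); simpl; auto.
  - assert (Hx : In x (l1 ++ l2)) by (eapply Permutation_in; [exact Hl | left; auto]).
    apply in_app_or in Hx as [Hx | Hx]; apply in_split in Hx as [a [b ->]].
    + rewrite <- app_assoc in Hl; apply Permutation_cons_app_inv in Hl.
      rewrite app_assoc in Hl; destruct (IH _ _ Hl) as [p [Hp [H1 H2]]].
      exists (x :: fst p, snd p); split; [apply in_flat_map; exists p; simpl; auto |].
      split; [| exact H2].
      eapply perm_trans; [apply Permutation_sym, Permutation_middle | apply perm_skip, H1].
    + rewrite app_assoc in Hl; apply Permutation_cons_app_inv in Hl.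
      rewrite <- app_assoc in Hl; destruct (IH _ _ Hl) as [p [Hp [H1 H2]]].
      exists (fst p, x :: snd p); split; [apply in_flat_map; exists p; simpl; auto |].
      split; [exact H1 |].
      eapply perm_trans; [apply Permutation_sym, Permutation_middle | apply perm_skip, H2].
Qed.

Lemma finite_split {A X Y Z} (P : list A -> X -> Prop) (Q : list A -> Y -> Prop)
    (C : X -> Y -> Z -> Prop) :
  (forall l l' x, Permutation l l' -> P l x -> P l' x) ->
  (forall l l' y, Permutation l l' -> Q l y -> Q l' y) ->
  (forall l, finite (P l)) -> (forall l, finite (Q l)) -> (forall x y, finite (C x y)) ->
  forall l, finite (fun z => exists l1 l2 x y,
                      Permutation l (l1 ++ l2) /\ P l1 x /\ Q l2 y /\ C x y z).
Proof.
  intros P_perm Q_perm HP HQ HC l.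
  apply (finite_ext (fun z => exists p, In p (splits l) /\
           exists x, P (fst p) x /\ exists y, Q (snd p) y /\ C x y z)).
  - intros z; split.
    + intros (p & Hp & x & Hx & y & Hy & Hz).
      exists (fst p), (snd p), x, y; auto using splits_perm.
    + intros (l1 & l2 & x & y & Hl & Hx & Hy & Hz).
      destruct (splits_complete _ _ _ Hl) as (p & Hp & H1 & H2).
      exists p; split; [exact Hp |].
      exists x; split; [eapply P_perm; eassumption |].
      exists y; split; [eapply Q_perm; eassumption | exact Hz].
  - apply finite_bind; [exists (splits l); tauto | intros p].
    apply finite_bind; [apply HP | intros x].
    apply finite_bind; [apply HQ | apply HC].
Qed.

Lemma lsub_t_perm k t vs vs' u :
  Permutation vs vs' -> lsub_t k t vs u -> lsub_t k t vs' u.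
Proof.
  intros Hvs Ht; destruct Ht.
  - eapply ls_app; [eapply perm_trans; [apply Permutation_sym, Hvs |] | |]; eassumption.
  - apply Permutation_nil in Hvs as ->; constructor.
  - eapply ls_cons; [eapply perm_trans; [apply Permutation_sym, Hvs |] | |]; eassumption.
Qed.

Lemma lsub_v_perm k v vs vs' w :
  Permutation vs vs' -> lsub_v k v vs w -> lsub_v k v vs' w.
Proof.
  intros Hvs Hv; destruct Hv.
  - apply Permutation_length_1_inv in Hvs as ->; constructor.
  - apply Permutation_nil in Hvs as ->; constructor; assumption.
  - constructor; eapply lsub_t_perm; eassumption.
Qed.

Lemma lsub_App_finite k s u :
  (forall vs, finite (lsub_t k s vs)) -> (forall vs, finite (lsub_t k u vs)) ->
  forall vs, finite (lsub_t k (App s u) vs).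
Proof.
  intros Hs Hu vs.
  eapply finite_ext;
    [| apply (finite_split (lsub_t k s) (lsub_t k u) (fun s' u' r => r = App s' u'));
       eauto using lsub_t_perm; intros s' u'; apply (finite_singleton (App s' u')); tauto].
  intros r; split.
  - intros (vs1 & vs2 & s' & u' & Hvs & Hs' & Hu' & ->); eapply ls_app; eassumption.
  - inversion 1; subst; eauto 8.
Qed.

Lemma lsub_nil_finite k vs : finite (lsub_t k (Bag []) vs).
Proof.
  destruct vs as [| v vs].
  - apply (finite_singleton (Bag [])); intros r; split; [inversion 1 | intros ->]; auto.
    constructor.
  - apply finite_empty; inversion 1.
Qed.

Lemma lsub_cons_finite k w ws :
  (forall vs, finite (lsub_v k w vs)) -> (forall vs, finite (lsub_t k (Bag ws) vs)) ->
  forall vs, finite (lsub_t k (Bag (w :: ws)) vs).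
Proof.
  intros Hw Hws vs.
  eapply finite_ext;
    [| apply (finite_split (lsub_v k w) (lsub_t k (Bag ws))
               (fun w' y r => exists ws', y = Bag ws' /\ r = Bag (w' :: ws')));
       eauto using lsub_v_perm, lsub_t_perm].
  - intros r; split.
    + intros (vs1 & vs2 & w' & y & Hvs & Hw' & Hy & ws' & -> & ->).
      eapply ls_cons; eassumption.
    + inversion 1; subst; eauto 10.
  - intros w' [s u | ws'].
    + apply finite_empty; intros r [ws' [E _]]; discriminate.
    + apply (finite_singleton (Bag (w' :: ws'))); intros r; split.
      * intros [? [E ->]]; injection E as ->; reflexivity.
      * intros ->; eauto.
Qed.

Lemma lsub_Var_finite n k vs : finite (lsub_v k (Var n) vs).
Proof.
  destruct (Nat.eq_dec n k) as [-> | Hnk].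
  - destruct vs as [| v [| v' vs]]; [| | apply finite_empty; inversion 1].
    + apply finite_empty; inversion 1; congruence.
    + apply (finite_singleton (Nat.iter k (lift_v 0) v)); intros w; split.
      * inversion 1; subst; congruence.
      * intros ->; constructor.
  - destruct vs as [| v vs].
    + apply (finite_singleton (Var (if k <? n then n - 1 else n))); intros w; split.
      * inversion 1; subst; auto; congruence.
      * intros ->; constructor; exact Hnk.
    + apply finite_empty; inversion 1; congruence.
Qed.

Lemma lsub_Lam_finite k t vs :
  finite (lsub_t (S k) t vs) -> finite (lsub_v k (Lam t) vs).
Proof.
  intros Ht.
  apply (finite_ext (fun w => exists t', lsub_t (S k) t vs t' /\ w = Lam t')).
  - intros w; split; [intros [t' [H ->]]; constructor; exact H | inversion 1; eauto].
  - apply finite_bind; [exact Ht | intros t'; apply (finite_singleton (Lam t')); tauto].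
Qed.

Lemma lsub_t_finite k t vs : finite (lsub_t k t vs).
Proof.
  revert t k vs.
  apply (term_value_ind (fun t => forall k vs, finite (lsub_t k t vs))
                        (fun v => forall k vs, finite (lsub_v k v vs))).
  - intros s u Hs Hu k; apply lsub_App_finite; auto.
  - intros ws Hws; induction Hws as [| w ws Hw _ IH]; intros k.
    + apply lsub_nil_finite.
    + apply lsub_cons_finite; auto.
  - apply lsub_Var_finite.
  - intros t Ht k vs; apply lsub_Lam_finite, Ht.
Qed.

Inductive root_redex : term -> term -> Prop :=
| rr_beta t vs : root_redex (Bag [Lam t]) (Bag vs)
| rr_zero vs u : length vs <> 1 -> root_redex (Bag vs) u
| rr_sigma1 t s1 s2 : root_redex (App (Bag [Lam t]) s1) s2
| rr_sigma3 v t s : root_redex (Bag [v]) (App (Bag [Lam t]) s).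

Lemma r_normal_App s u :
  r_normal (App s u) <-> r_normal s /\ r_normal u /\ ~ root_redex s u.
Proof.
  split.
  - intros H; repeat split.
    + intros S HS; eapply H, r_appl, HS.
    + intros U HU; eapply H, r_appr, HU.
    + destruct 1 as [t vs | vs u Hvs | | ].
      * destruct (lsub_t_finite 0 t vs) as [T HT]; eapply H, r_beta, HT.
      * eapply H, r_zero, Hvs.
      * eapply H, r_sigma1.
      * eapply H, r_sigma3.
  - intros (Hs & Hu & Hroot) T HT; inversion HT; subst.
    + apply Hroot, rr_beta.
    + apply Hroot, rr_zero; assumption.
    + apply Hroot, rr_sigma1.
    + apply Hroot, rr_sigma3.
    + eapply Hs; eassumption.
    + eapply Hu; eassumption.
Qed.

Lemma r_normal_Bag vs : r_normal (Bag vs) <-> forall t, In (Lam t) vs -> r_normal t.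
Proof.
  split.
  - intros H t Ht T HT; apply in_split in Ht as [vs1 [vs2 ->]].
    eapply H, r_bag, HT.
  - intros H T HT; inversion HT; subst.
    eapply H; [apply in_or_app; right; left; reflexivity | eassumption].
Qed.

Lemma coh_bag_shape vs :
  (forall v w, In v vs -> In w vs -> coh_v v w) ->
  (exists x, vs = repeat (Var x) (length vs)) \/ (exists l, vs = map Lam l).
Proof.
  intros Hcoh; destruct vs as [| [x | t] vs'].
  - left; exists 0; reflexivity.
  - left; exists x; apply Forall_eq_repeat, Forall_forall; intros w Hw.
    specialize (Hcoh _ _ (or_introl eq_refl) Hw); inversion Hcoh; reflexivity.
  - right; assert (Hlam : forall w, In w (Lam t :: vs') -> exists t', w = Lam t').
    { intros w Hw; specialize (Hcoh _ _ (or_introl eq_refl) Hw); inversion Hcoh; eauto. }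
    clear Hcoh; induction (Lam t :: vs') as [| w l IH].
    + exists []; reflexivity.
    + destruct (Hlam w (or_introl eq_refl)) as [t' ->], IH as [l' ->];
        [intros; apply Hlam; right; assumption |].
      exists (t' :: l'); reflexivity.
Qed.

Lemma approx_Bag vs :
  (forall v w, In v vs -> In w vs -> coh_v v w) ->
  (forall t, In (Lam t) vs -> approx t) -> approx (Bag vs).
Proof.
  intros Hcoh Happrox; apply ap_b.
  destruct (coh_bag_shape _ Hcoh) as [[x ->] | [l ->]]; constructor.
  intros a Ha; apply Happrox, in_map, Ha.
Qed.

Lemma approx_App s u :
  approx s -> approx u -> ~ root_redex s u -> approx (App s u).
Proof.
  intros Hs Hu Hroot.
  destruct Hs as [s Hs | a n Ha Hn]; [| exfalso; apply Hroot, rr_sigma1].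
  destruct Hs as [m x | l Hl | n Hn]; [| | apply ap_b, ab_neu, neu_app; assumption].
  - destruct m as [| [| m]]; [exfalso; apply Hroot, rr_zero; discriminate | |
                              exfalso; apply Hroot, rr_zero; discriminate].
    destruct Hu as [u Hu | a n Ha Hn]; [| exfalso; apply Hroot, rr_sigma3].
    apply ap_b, ab_neu, neu_head, Hu.
  - destruct l as [| a [| a' l]]; [exfalso; apply Hroot, rr_zero; discriminate | |
                                   exfalso; apply Hroot, rr_zero; discriminate].
    destruct Hu as [u Hu | a' n Ha' Hn]; [| exfalso; apply Hroot, rr_sigma3].
    destruct Hu as [m x | l' _ | n Hn]; [exfalso; apply Hroot, rr_beta .. |].
    apply ap_c; [apply Hl; left; reflexivity | exact Hn].
Qed.

Lemma coh_r_normal_approx t : coh_t t t -> r_normal t -> approx t.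
Proof.
  revert t.
  apply (term_value_ind (fun t => coh_t t t -> r_normal t -> approx t)
           (fun v => forall t, v = Lam t -> coh_t t t -> r_normal t -> approx t)).
  - intros s u IHs IHu Hcoh Hnorm.
    inversion Hcoh; subst; apply r_normal_App in Hnorm as (Hs & Hu & Hroot).
    apply approx_App; auto.
  - intros vs IH Hcoh Hnorm.
    assert (Hcoh_vs : forall v w, In v vs -> In w vs -> coh_v v w).
    { inversion Hcoh; subst; intros v w Hv Hw; auto using in_or_app. }
    apply approx_Bag; [exact Hcoh_vs |].
    intros t Ht; eapply (proj1 (Forall_forall _ _) IH); [exact Ht | reflexivity | |].
    + specialize (Hcoh_vs _ _ Ht Ht); inversion Hcoh_vs; assumption.
    + apply (proj1 (r_normal_Bag vs) Hnorm), Ht.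
  - discriminate.
  - intros t IH t' E; injection E as <-; exact IH.
Qed.

Lemma neu_App n : neu n -> exists s u, n = App s u.
Proof. destruct 1; eauto. Qed.

Lemma neu_not_lam_app n t u : neu n -> n <> App (Bag [Lam t]) u.
Proof.
  destruct 1 as [x b _ | n a Hn _]; [congruence |].
  destruct (neu_App _ Hn) as [s [u' ->]]; discriminate.
Qed.

Lemma approx_b_not_lam_app b t u : approx_b b -> b <> App (Bag [Lam t]) u.
Proof. destruct 1; [discriminate | discriminate | apply neu_not_lam_app; assumption]. Qed.

Scheme approx_mut := Induction for approx Sort Prop
with approx_b_mut := Induction for approx_b Sort Prop
with neu_mut := Induction for neu Sort Prop.

Lemma approx_r_normal t : approx t -> r_normal t.
Proof.
  revert t.
  apply (approx_mut (fun t _ => r_normal t) (fun t _ => r_normal t) (fun t _ => r_normal t)).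
  - auto.
  - intros a n _ Ha Hn_neu Hn; apply r_normal_App; repeat split.
    + apply r_normal_Bag; intros t [E | []]; injection E as ->; exact Ha.
    + exact Hn.
    + inversion 1; subst.
      * destruct (neu_App _ Hn_neu) as [? [? E]]; discriminate.
      * contradiction.
      * eapply neu_not_lam_app; eauto.
  - intros m x; apply r_normal_Bag; intros t Ht; apply repeat_spec in Ht; discriminate.
  - intros l _ IH; apply r_normal_Bag; intros t Ht.
    apply in_map_iff in Ht as [a [E Ha]]; injection E as ->; auto.
  - auto.
  - intros x b Hb IH; apply r_normal_App; repeat split.
    + apply r_normal_Bag; intros t [E | []]; discriminate.
    + exact IH.
    + inversion 1; subst; [contradiction | eapply approx_b_not_lam_app; eauto].
  - intros n a Hn IHn _ IHa; apply r_normal_App; repeat split; auto.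
    destruct (neu_App _ Hn) as [s [u ->]].
    inversion 1; subst; eapply neu_not_lam_app; eauto.
Qed.

Theorem lemma3p16 (t : term) :
  coh_t t t -> (r_normal t <-> approx t).
Proof.
  intros Hcoh; split; [apply coh_r_normal_approx, Hcoh | apply approx_r_normal].
Qed.
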